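(* Fix $\zeta\in\mathbb{R}$ and $\delta\in(0,1/6)$. Define \begin{align*} E(\tau,t) =&\; \frac{i \big(\operatorname{Li}_2(e^{2 \pi t})-\operatorname{Li}_2(e^{i \pi \tau +2 \pi t})\big)}{2 \pi \tau} +\frac{\ln(1-e^{2 \pi t})}{2}\\ & +\frac{i \pi \tau}{12} \bigg(\frac{e^{2 \pi t+i \pi \tau}}{e^{2 \pi t+i \pi \tau} - 1}-\frac{e^{2 \pi \zeta }}{e^{2 \pi \zeta}+1}-\frac{e^{2 \pi t}}{e^{2 \pi \zeta }+e^{2 \pi t}}+2\bigg). \end{align*} Then there is a constant $C>0$ such that $|E(b^2,t)|\leq Cb^2$ for all sufficiently small $b>0$ and all $t$ with $\operatorname{Im} t\in(-1/2+\delta,-2\delta)$.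
   Context: Principal branches are used: $\operatorname{Im}\ln z\in(-\pi,\pi]$ and $\operatorname{Li}_2(z)=-\int_0^z\frac{\ln(1-u)}{u}du$ for $z\in\mathbb{C}\setminus[1,\infty)$. *)

From Stdlib Require Import Reals.
From Coquelicot Require Import Coquelicot.
Open Scope R_scope.

Definition cexp (z : C) : C :=
  (exp (Re z) * cos (Im z), exp (Re z) * sin (Im z)).

(* principal argument, values in (-PI, PI]  (atan2 convention) *)
Definition carg (z : C) : R :=
  let x := Re z in let y := Im z in
  if Rlt_dec 0 x then atan (y / x)
  else if Rlt_dec x 0 then
    (if Rle_dec 0 y then atan (y / x) + PI else atan (y / x) - PI)
  else if Rlt_dec 0 y then PI / 2
  else if Rlt_dec y 0 then - (PI / 2)
  else 0.

Definition cln (z : C) : C := (ln (Cmod z), carg z).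

(* Li_2(z) = - int_0^z ln(1-u)/u du along the segment [0,z]:
   substituting u = s z gives - int_0^1 ln(1 - s z)/s ds; the integrand
   has a removable singularity at s = 0 with value -z. *)
Definition Li2_integrand (z : C) (s : R) : C :=
  if Req_EM_T s 0 then Copp z else Cmult (RtoC (/ s)) (cln (Cminus 1 (Cmult (RtoC s) z))).

Definition Li2 (z : C) : C :=
  Copp (@RInt C_R_CompleteNormedModule (Li2_integrand z) 0 1).

Definition Ci : C := (0, 1).

Definition Eterm (zeta : R) (tau t : C) : C :=
  let q := cexp (Cmult (RtoC (2 * PI)) t) in
  let w := cexp (Cplus (Cmult (Cmult Ci (RtoC PI)) tau) (Cmult (RtoC (2 * PI)) t)) in
  let ez := RtoC (exp (2 * PI * zeta)) in
  Cplus (Cplus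
    (Cdiv (Cmult Ci (Cminus (Li2 q) (Li2 w))) (Cmult (RtoC (2 * PI)) tau))
    (Cdiv (cln (Cminus 1 q)) (RtoC 2)))
    (Cmult (Cdiv (Cmult (Cmult Ci (RtoC PI)) tau) (RtoC 12))
       (Cplus (Cminus (Cminus (Cdiv w (Cminus w 1)) (Cdiv ez (Cplus ez 1)))
                      (Cdiv q (Cplus ez q))) (RtoC 2))).

From Pilot Require Import Defs.
From Stdlib Require Import Reals Lra Psatz.
From Coquelicot Require Import Coquelicot.
Open Scope R_scope.

(* Put q = rho e^(i alpha), w = rho e^(i (alpha + h)) with h = PI b^2 and
   l(phi) = ln (1 - rho e^(i phi)).  Differentiating under the integral sign,
   phi |-> Li2 (rho e^(i phi)) has derivative -i l(phi) as long as the point stays in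
   the lower half plane, so the first two terms of E equal -i/(2h) times
   Li2 w - Li2 q + i h l(alpha), the error of the left-endpoint rule for the integral
   of -i l over [alpha, alpha + h].  That error is at most h^2 / sin(2 PI delta), because
   |l'(phi)| = rho / |1 - rho e^(i phi)| <= 1 / |sin phi| and the arguments stay in
   [-PI + 2 PI delta, -2 PI delta].  The same estimate rho / |Im| bounds the rational
   terms, which carry the explicit factor PI b^2 / 12. *)

Lemma carg_re_pos (z : C) : 0 < Re z -> carg z = atan (Im z / Re z).
Proof.
  intros H. unfold carg; cbv zeta.
  destruct (Rlt_dec 0 (Re z)); [reflexivity | lra].
Qed.

Lemma carg_im_pos (z : C) : 0 < Im z -> carg z = PI / 2 - atan (Re z / Im z).
Proof.
  destruct z as [x y]. unfold carg, Re, Im; cbv zeta; simpl. intros Hy.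
  destruct (Rlt_dec 0 x) as [Hx|Hx].
  - assert (Hq : 0 < x / y) by (apply Rdiv_lt_0_compat; lra).
    rewrite <- (atan_inv _ Hq). f_equal. field. lra.
  - destruct (Rlt_dec x 0) as [Hx'|Hx'].
    + destruct (Rle_dec 0 y) as [_|Hy']; [|lra].
      assert (Hq : 0 < - (x / y)).
      { apply Ropp_0_gt_lt_contravar. apply Rdiv_neg_pos; lra. }
      pose proof (atan_inv _ Hq) as E.
      replace (/ - (x / y)) with (- (y / x)) in E by (field; lra).
      rewrite !atan_opp in E. lra.
    + replace x with 0 by lra.
      destruct (Rlt_dec 0 y); [|lra].
      replace (0 / y) with 0 by (field; lra). rewrite atan_0. lra.
Qed.

Lemma is_derive_continuity_pt (f : R -> R) (x l : R) :
  is_derive f x l -> continuity_pt f x.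
Proof.
  intros H. apply continuity_pt_filterlim, (ex_derive_continuous f). exists l. exact H.
Qed.

Lemma continuity_pt_locally_pos (f : R -> R) (x : R) :
  continuity_pt f x -> 0 < f x -> locally x (fun y => 0 < f y).
Proof.
  intros Hc Hp. apply continuity_pt_filterlim in Hc.
  apply Hc. exists (mkposreal _ Hp). intros y Hy.
  change (Rabs (y - f x) < f x) in Hy.
  apply Rabs_lt_between' in Hy. simpl in Hy. lra.
Qed.

Lemma continuity_2d_pt_locally_pos (f : R -> R -> R) (x y : R) :
  continuity_2d_pt f x y -> 0 < f x y -> locally_2d (fun u v => 0 < f u v) x y.
Proof.
  intros H Hp. destruct (H (mkposreal _ Hp)) as [d Hd]. exists d. intros u v Hu Hv.
  specialize (Hd u v Hu Hv). apply Rabs_lt_between' in Hd; simpl in Hd; lra.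
Qed.

Lemma continuity_2d_pt_slice (f : R -> R -> R) (x y : R) :
  continuity_2d_pt f x y -> continuity_pt (fun v => f x v) y.
Proof.
  intros H. apply continuity_pt_filterlim. intros P [e He].
  destruct (H e) as [d Hd]. exists d. intros v Hv. apply He.
  change (Rabs (f x v - f x y) < e). apply Hd; [|exact Hv].
  rewrite Rminus_diag, Rabs_R0. apply cond_pos.
Qed.

Lemma continuity_pt_quotient_ext (c : R -> R) (l s : R) :
  (s = 0 -> is_derive c 0 l /\ c 0 = 0) -> (s <> 0 -> ex_derive c s) ->
  continuity_pt (fun v => if Req_EM_T v 0 then l else / v * c v) s.
Proof.
  intros H0 Hder. destruct (Req_dec s 0) as [->|Hs].
  - destruct (H0 eq_refl) as [Hd Hc0]. apply is_derive_Reals in Hd.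
    intros eps Heps. destruct (Hd eps Heps) as [d Hdd].
    exists d. split; [apply cond_pos|]. intros x [[_ Hx0] Hx].
    simpl in *. unfold R_dist in *.
    destruct (Req_EM_T x 0) as [E|E]; [congruence|].
    destruct (Req_EM_T 0 0) as [_|E']; [|congruence].
    rewrite Rminus_0_r in Hx. specialize (Hdd x E Hx).
    rewrite Rplus_0_l, Hc0 in Hdd.
    replace ((c x - 0) / x) with (/ x * c x) in Hdd by (field; exact E). exact Hdd.
  - destruct (Hder Hs) as [dc Hdc].
    apply (continuity_pt_ext_loc (fun v => / v * c v)).
    { exists (mkposreal _ (Rabs_pos_lt s Hs)). intros v Hv.
      change (Rabs (v - s) < Rabs s) in Hv.
      destruct (Req_EM_T v 0) as [->|]; [|reflexivity].
      rewrite Rminus_0_l, Rabs_Ropp in Hv. lra. }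
    apply continuity_pt_mult.
    + apply continuity_pt_inv; [apply continuity_pt_id | exact Hs].
    + exact (is_derive_continuity_pt c s dc Hdc).
Qed.

Ltac rewrite_Derive H :=
  match type of H with is_derive ?f ?x ?l =>
    replace (Derive (fun t => f t) x) with l by (symmetry; apply is_derive_unique; exact H)
  end.

(* Componentwise derivative of a complex function of a real variable: Coquelicot
   differentiates under the integral sign only for real-valued integrands. *)
Definition is_derive_C (g : R -> C) (x : R) (l : C) : Prop :=
  is_derive (fun y => Re (g y)) x (Re l) /\ is_derive (fun y => Im (g y)) x (Im l).

(* Keeps [z] off the branch cut of [cln]; each disjunct is one chart of [carg]. *)
Definition re_or_im_pos (z : C) : Prop := 0 < Re z \/ 0 < Im z.

Lemma re_or_im_pos_sqnorm (z : C) : re_or_im_pos z -> 0 < Re z ^ 2 + Im z ^ 2.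
Proof. intros [H|H]; nra. Qed.

Lemma is_derive_ln_sqnorm (a b : R -> R) (a' b' x : R) :
  is_derive a x a' -> is_derive b x b' -> 0 < a x ^ 2 + b x ^ 2 ->
  is_derive (fun y => ln (sqrt (a y ^ 2 + b y ^ 2))) x
    ((a x * a' + b x * b') / (a x ^ 2 + b x ^ 2)).
Proof.
  intros Ha Hb Hp.
  assert (Hp' : 0 < a x * (a x * 1) + b x * (b x * 1)) by (simpl in Hp; lra).
  auto_derive.
  - repeat split; try (eexists; eassumption); try assumption.
    apply sqrt_lt_R0; assumption.
  - rewrite_Derive Ha. rewrite_Derive Hb.
    assert (Hs := sqrt_sqrt _ (Rlt_le _ _ Hp')).
    assert (Hs0 := sqrt_lt_R0 _ Hp').
    set (S := sqrt (a x * (a x * 1) + b x * (b x * 1))) in *.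
    simpl. field_simplify_eq. 2: lra.
    replace (S ^ 2) with (S * S) by ring. rewrite Hs. ring.
Qed.

Lemma is_derive_carg (a b : R -> R) (a' b' x : R) :
  is_derive a x a' -> is_derive b x b' -> re_or_im_pos (a x, b x) ->
  is_derive (fun y => carg (a y, b y)) x
    ((a x * b' - b x * a') / (a x ^ 2 + b x ^ 2)).
Proof.
  intros Ha Hb [H|H]; simpl in H.
  - apply (is_derive_ext_loc (fun y => atan (b y / a y))).
    { destruct (continuity_pt_locally_pos a x (is_derive_continuity_pt _ _ _ Ha) H) as [e He].
      exists e. intros y Hy. rewrite carg_re_pos by exact (He y Hy). reflexivity. }
    auto_derive.
    + repeat split; try (eexists; eassumption); lra.
    + rewrite_Derive Ha. rewrite_Derive Hb. field. split; [nra|lra].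
  - apply (is_derive_ext_loc (fun y => PI / 2 - atan (a y / b y))).
    { destruct (continuity_pt_locally_pos b x (is_derive_continuity_pt _ _ _ Hb) H) as [e He].
      exists e. intros y Hy. rewrite carg_im_pos by exact (He y Hy). reflexivity. }
    auto_derive.
    + repeat split; try (eexists; eassumption); lra.
    + rewrite_Derive Ha. rewrite_Derive Hb. field. split; [nra|lra].
Qed.

Lemma is_derive_C_cln (g : R -> C) (x : R) (l : C) :
  is_derive_C g x l -> re_or_im_pos (g x) ->
  is_derive_C (fun y => cln (g y)) x (Cdiv l (g x)).
Proof.
  intros [Ha Hb] Hg. pose proof (re_or_im_pos_sqnorm _ Hg) as Hp. split.
  - replace (Re (Cdiv l (g x)))
      with ((Re (g x) * Re l + Im (g x) * Im l) / (Re (g x) ^ 2 + Im (g x) ^ 2)).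
    + exact (is_derive_ln_sqnorm (fun y => Re (g y)) (fun y => Im (g y)) _ _ x Ha Hb Hp).
    + revert Hp. destruct (g x), l. unfold Cdiv, Cmult, Cinv, Re, Im. simpl.
      intros. field. lra.
  - replace (Im (Cdiv l (g x)))
      with ((Re (g x) * Im l - Im (g x) * Re l) / (Re (g x) ^ 2 + Im (g x) ^ 2)).
    + exact (is_derive_carg (fun y => Re (g y)) (fun y => Im (g y)) _ _ x Ha Hb Hg).
    + revert Hp. destruct (g x), l. unfold Cdiv, Cmult, Cinv, Re, Im. simpl.
      intros. field. lra.
Qed.

Lemma is_derive_C_ext_loc (g h : R -> C) (x : R) (l : C) :
  locally x (fun y => g y = h y) -> is_derive_C g x l -> is_derive_C h x l.
Proof.
  intros He [H1 H2]. split.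
  - apply (is_derive_ext_loc (fun y => Re (g y))); [|exact H1].
    apply (filter_imp _ _ (fun y E => f_equal Re E) He).
  - apply (is_derive_ext_loc (fun y => Im (g y))); [|exact H2].
    apply (filter_imp _ _ (fun y E => f_equal Im E) He).
Qed.

Lemma is_derive_C_plus (g h : R -> C) (x : R) (l m : C) :
  is_derive_C g x l -> is_derive_C h x m -> is_derive_C (fun y => Cplus (g y) (h y)) x (Cplus l m).
Proof.
  intros [G1 G2] [H1 H2].
  split; [exact (is_derive_plus _ _ _ _ _ G1 H1) | exact (is_derive_plus _ _ _ _ _ G2 H2)].
Qed.

Lemma is_derive_C_Cmult_l (c : C) (g : R -> C) (x : R) (l : C) :
  is_derive_C g x l -> is_derive_C (fun y => Cmult c (g y)) x (Cmult c l).
Proof.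
  intros [H1 H2]. split.
  - apply (is_derive_minus (fun y => Re c * Re (g y)) (fun y => Im c * Im (g y)));
      apply is_derive_scal; assumption.
  - apply (is_derive_plus (fun y => Re c * Im (g y)) (fun y => Im c * Re (g y)));
      apply is_derive_scal; assumption.
Qed.

Lemma Im_le_Cmod (z : C) : Rabs (Im z) <= Cmod z.
Proof.
  unfold Cmod. rewrite <- sqrt_Rsqr_abs. apply sqrt_le_1_alt. unfold Rsqr, Re, Im.
  pose proof (pow2_ge_0 (fst z)). nra.
Qed.

Lemma Cmod_Ci : Cmod Ci = 1.
Proof. unfold Cmod, Ci. cbn [fst snd]. replace (0 ^ 2 + 1 ^ 2) with 1 by ring. apply sqrt_1. Qed.

Lemma Cmod_div_le_of_Im (u v : C) (sg : R) :
  0 < sg -> 0 < Cmod u -> Cmod u * sg <= Rabs (Im v) -> Cmod (Cdiv u v) <= / sg.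
Proof.
  intros Hsg Hu Hv. pose proof (Im_le_Cmod v) as Hm.
  assert (Hv0 : v <> 0%C).
  { intros ->. unfold Im in Hv. simpl in Hv. rewrite Rabs_R0 in Hv. nra. }
  rewrite Cmod_div by exact Hv0.
  assert (Hvp : 0 < Cmod v) by (apply Cmod_gt_0, Hv0).
  apply (Rmult_le_reg_l (Cmod v * sg)); [nra|].
  replace (Cmod v * sg * (Cmod u / Cmod v)) with (Cmod u * sg) by (field; lra).
  replace (Cmod v * sg * / sg) with (Cmod v) by (field; lra). lra.
Qed.

Lemma Cmod_sub_le (x y : C) : Cmod (Cminus x y) <= Cmod x + Cmod y.
Proof.
  unfold Cminus. eapply Rle_trans; [apply Cmod_triangle|]. rewrite Cmod_opp. lra.
Qed.

Lemma Cmod_sub_le_of_is_derive_C (g dg : R -> C) (a b M : R) :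
  a <= b ->
  (forall x, a <= x <= b -> is_derive_C g x (dg x)) ->
  (forall x, a <= x <= b -> Cmod (dg x) <= M) ->
  Cmod (Cminus (g b) (g a)) <= M * (b - a).
Proof.
  intros Hab Hd HM.
  (* Apply the real mean value theorem to the component of [g] along [v]. *)
  set (v := Cminus (g b) (g a)).
  set (h := fun y => Re v * Re (g y) + Im v * Im (g y)).
  assert (Hh : forall y, a <= y <= b -> is_derive h y (Re v * Re (dg y) + Im v * Im (dg y))).
  { intros y Hy. destruct (Hd y Hy) as [H1 H2].
    apply (is_derive_plus (fun y => Re v * Re (g y)) (fun y => Im v * Im (g y)));
      apply is_derive_scal; assumption. }
  destruct (MVT_gen h a b (fun y => Re v * Re (dg y) + Im v * Im (dg y))) as [c [Hc Ec]].
  - intros y Hy. rewrite Rmin_left, Rmax_right in Hy by lra. apply Hh. lra.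
  - intros y Hy. rewrite Rmin_left, Rmax_right in Hy by lra.
    exact (is_derive_continuity_pt _ _ _ (Hh y Hy)).
  - rewrite Rmin_left, Rmax_right in Hc by lra.
    assert (Hv : h b - h a = Cmod v ^ 2).
    { rewrite Cmod2_alt. unfold h, v, Cminus, Cplus, Copp, Re, Im. simpl. ring. }
    assert (Hdot : Re v * Re (dg c) + Im v * Im (dg c) <= Cmod v * M).
    { replace (Re v * Re (dg c) + Im v * Im (dg c)) with (Re (Cmult (Cconj v) (dg c)))
        by (unfold Cmult, Cconj, Re, Im; simpl; ring).
      eapply Rle_trans; [apply Rle_abs|]. eapply Rle_trans; [apply re_le_Cmod|].
      rewrite Cmod_mult, Cmod_conj.
      apply Rmult_le_compat_l; [apply Cmod_ge_0 | apply HM; exact Hc]. }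
    assert (HM0 : 0 <= M) by (eapply Rle_trans; [apply Cmod_ge_0 | apply (HM a); lra]).
    assert (Hsq : Cmod v * Cmod v <= Cmod v * (M * (b - a))).
    { replace (Cmod v * Cmod v) with (Cmod v ^ 2) by ring. rewrite <- Hv, Ec.
      replace (Cmod v * (M * (b - a))) with ((Cmod v * M) * (b - a)) by ring.
      apply Rmult_le_compat_r; lra. }
    pose proof (Cmod_ge_0 v). destruct (Req_dec (Cmod v) 0) as [E|E].
    + rewrite E. apply Rmult_le_pos; lra.
    + apply (Rmult_le_reg_l (Cmod v)); lra.
Qed.

Lemma is_derive_RInt_param_FTC (f d G : R -> R -> R) (x : R) :
  locally x (fun u => forall v, 0 <= v <= 1 -> is_derive (fun u' => f u' v) u (d u v)) ->
  (forall v, 0 <= v <= 1 ->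
     locally_2d (fun u w => is_derive (fun u' => f u' w) u (d u w)) x v /\
     continuity_2d_pt d x v /\ is_derive (G x) v (d x v)) ->
  locally x (fun u => ex_RInt (f u) 0 1) ->
  is_derive (fun u => RInt (f u) 0 1) x (G x 1 - G x 0).
Proof.
  intros Hloc Hpt Hint.
  assert (Hv : forall v, Rmin 0 1 <= v <= Rmax 0 1 -> 0 <= v <= 1)
    by (intros v; rewrite Rmin_left, Rmax_right by lra; tauto).
  replace (G x 1 - G x 0) with (RInt (fun v => Derive (fun u => f u v) x) 0 1).
  - apply is_derive_RInt_param.
    + destruct Hloc as [e He]. exists e. intros u Hu v Hv'.
      eexists. apply (He u Hu v (Hv v Hv')).
    + intros v Hv'. destruct (Hpt v (Hv v Hv')) as [Hd [Hc _]].
      apply (continuity_2d_pt_ext_loc d); [|exact Hc].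
      apply (locally_2d_impl _ _ _ _ (locally_2d_forall _ x v
               (fun u w H => eq_sym (is_derive_unique _ _ _ H))) Hd).
    + exact Hint.
  - rewrite (RInt_ext _ (d x)).
    2:{ intros v Hv'. apply is_derive_unique.
        apply (locally_2d_singleton _ _ _ (proj1 (Hpt v (Hv v ltac:(lra))))). }
    apply is_RInt_unique, (is_RInt_derive (G x) (d x)).
    + intros v Hv'. apply Hpt, Hv, Hv'.
    + intros v Hv'. apply continuity_pt_filterlim.
      apply (continuity_2d_pt_slice d), Hpt, Hv, Hv'.
Qed.

Lemma is_derive_C_RInt_param_FTC (f dF G : R -> R -> C) (x : R) :
  locally x (fun u => forall v, 0 <= v <= 1 -> is_derive_C (fun u' => f u' v) u (dF u v)) ->
  (forall v, 0 <= v <= 1 ->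
     locally_2d (fun u w => is_derive_C (fun u' => f u' w) u (dF u w)) x v /\
     continuity_2d_pt (fun u w => Re (dF u w)) x v /\
     continuity_2d_pt (fun u w => Im (dF u w)) x v /\
     is_derive_C (G x) v (dF x v)) ->
  locally x (fun u => ex_RInt (fun v => Re (f u v)) 0 1 /\ ex_RInt (fun v => Im (f u v)) 0 1) ->
  is_derive_C (fun u => (RInt (fun v => Re (f u v)) 0 1, RInt (fun v => Im (f u v)) 0 1)) x
    (Cminus (G x 1) (G x 0)).
Proof.
  intros Hloc Hpt Hint.
  assert (Hproj : forall z w : C, Cminus z w = (Re z - Re w, Im z - Im w))
    by (intros [] []; unfold Cminus, Cplus, Copp, Re, Im; simpl; f_equal; ring).
  rewrite Hproj. split.
  - apply (is_derive_RInt_param_FTC (fun u v => Re (f u v)) (fun u v => Re (dF u v))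
             (fun u v => Re (G u v))).
    + apply (filter_imp _ _ (fun u H v Hv => proj1 (H v Hv)) Hloc).
    + intros v Hv. destruct (Hpt v Hv) as [Hd [Hc1 [_ [HG _]]]]. refine (conj _ (conj Hc1 HG)).
      apply (locally_2d_impl _ _ _ _ (locally_2d_forall _ x v (fun u w H => proj1 H)) Hd).
    + apply (filter_imp _ _ (fun u H => proj1 H) Hint).
  - apply (is_derive_RInt_param_FTC (fun u v => Im (f u v)) (fun u v => Im (dF u v))
             (fun u v => Im (G u v))).
    + apply (filter_imp _ _ (fun u H v Hv => proj2 (H v Hv)) Hloc).
    + intros v Hv. destruct (Hpt v Hv) as [Hd [_ [Hc2 [_ HG]]]]. refine (conj _ (conj Hc2 HG)).
      apply (locally_2d_impl _ _ _ _ (locally_2d_forall _ x v (fun u w H => proj2 H)) Hd).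
    + apply (filter_imp _ _ (fun u H => proj2 H) Hint).
Qed.

Ltac continuity_2d :=
  match goal with
  | |- continuity_2d_pt (fun u v => @?f u v + @?g u v) _ _ =>
      apply (continuity_2d_pt_plus f g); continuity_2d
  | |- continuity_2d_pt (fun u v => @?f u v - @?g u v) _ _ =>
      apply (continuity_2d_pt_minus f g); continuity_2d
  | |- continuity_2d_pt (fun u v => @?f u v * @?g u v) _ _ =>
      apply (continuity_2d_pt_mult f g); continuity_2d
  | |- continuity_2d_pt (fun u v => - @?f u v) _ _ =>
      apply (continuity_2d_pt_opp f); continuity_2d
  | |- continuity_2d_pt (fun u v => / @?f u v) _ _ =>
      apply (continuity_2d_pt_inv f); [continuity_2d|]
  | |- continuity_2d_pt (fun u v => (@?f u v) ^ 2) _ _ =>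
      apply (continuity_2d_pt_ext (fun u v => f u v * f u v));
      [intros; simpl; ring | continuity_2d]
  | |- continuity_2d_pt (fun u v => cos (@?f u v)) _ _ =>
      apply (continuity_1d_2d_pt_comp cos f); [apply continuity_cos | continuity_2d]
  | |- continuity_2d_pt (fun u v => sin (@?f u v)) _ _ =>
      apply (continuity_1d_2d_pt_comp sin f); [apply continuity_sin | continuity_2d]
  | |- continuity_2d_pt (fun u v => u) _ _ => apply continuity_2d_pt_id1
  | |- continuity_2d_pt (fun u v => v) _ _ => apply continuity_2d_pt_id2
  | |- continuity_2d_pt (fun u v => _) _ _ => apply continuity_2d_pt_const
  | _ => idtac
  end.

Lemma sin_sq_add_cos_sq (u : R) : sin u ^ 2 + cos u ^ 2 = 1.
Proof. pose proof (sin2_cos2 u) as H. unfold Rsqr in H. lra. Qed.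

Definition cpolar (rho phi : R) : C := (rho * cos phi, rho * sin phi).

Lemma Cmod_cpolar (rho phi : R) : 0 <= rho -> Cmod (cpolar rho phi) = rho.
Proof.
  intros H. unfold Cmod, cpolar. simpl.
  replace (rho * cos phi * (rho * cos phi * 1) + rho * sin phi * (rho * sin phi * 1))
    with (rho ^ 2 * (sin phi ^ 2 + cos phi ^ 2)) by ring.
  rewrite sin_sq_add_cos_sq, Rmult_1_r. apply sqrt_pow2, H.
Qed.

Section DilogarithmOnCircle.

Variable rho : R.
Hypothesis rho_pos : 0 < rho.

Definition one_sub_sz (phi s : R) : C := (1 - s * (rho * cos phi), - (s * (rho * sin phi))).

Definition sqnorm_one_sub_sz (phi s : R) : R :=
  (1 - s * (rho * cos phi)) ^ 2 + (s * (rho * sin phi)) ^ 2.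

(* [dlog phi s = - z / (1 - s z)] with [z = cpolar rho phi], the [s]-derivative of
   [cln (1 - s z)]. *)
Definition dlog (phi s : R) : C :=
  ((s * rho ^ 2 - rho * cos phi) / sqnorm_one_sub_sz phi s,
   - (rho * sin phi) / sqnorm_one_sub_sz phi s).

Lemma one_sub_sz_eq (phi s : R) :
  Cminus 1 (Cmult (RtoC s) (cpolar rho phi)) = one_sub_sz phi s.
Proof.
  unfold Cminus, Cmult, Cplus, Copp, RtoC, cpolar, one_sub_sz. simpl. f_equal; ring.
Qed.

Lemma re_or_im_pos_one_sub_sz (phi s : R) :
  sin phi < 0 -> 0 <= s -> re_or_im_pos (one_sub_sz phi s).
Proof.
  intros Hs Hs0. unfold re_or_im_pos, one_sub_sz, Re, Im; simpl.
  destruct (Req_dec s 0) as [->|Hn]; [left; lra|].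
  right. assert (0 < s * rho) by (apply Rmult_lt_0_compat; lra). nra.
Qed.

Lemma sqnorm_one_sub_sz_pos (phi s : R) :
  re_or_im_pos (one_sub_sz phi s) -> 0 < sqnorm_one_sub_sz phi s.
Proof.
  intros H. apply re_or_im_pos_sqnorm in H.
  unfold sqnorm_one_sub_sz, one_sub_sz, Re, Im in *; simpl in *. nra.
Qed.

Lemma locally_2d_re_or_im_pos_one_sub_sz (phi s : R) :
  re_or_im_pos (one_sub_sz phi s) ->
  locally_2d (fun u v => re_or_im_pos (one_sub_sz u v)) phi s.
Proof.
  unfold re_or_im_pos, one_sub_sz, Re, Im; simpl. intros [H|H].
  - assert (Hc : continuity_2d_pt (fun u v => 1 - v * (rho * cos u)) phi s) by continuity_2d.
    apply (locally_2d_impl _ _ _ _ (locally_2d_forall _ _ _ (fun u v H => or_introl H))).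
    exact (continuity_2d_pt_locally_pos _ _ _ Hc H).
  - assert (Hc : continuity_2d_pt (fun u v => - (v * (rho * sin u))) phi s) by continuity_2d.
    apply (locally_2d_impl _ _ _ _ (locally_2d_forall _ _ _ (fun u v H => or_intror H))).
    exact (continuity_2d_pt_locally_pos _ _ _ Hc H).
Qed.

Lemma is_derive_C_cln_one_sub_sz_s (phi s : R) :
  re_or_im_pos (one_sub_sz phi s) ->
  is_derive_C (fun v => cln (one_sub_sz phi v)) s (dlog phi s).
Proof.
  intros Hg. pose proof (sqnorm_one_sub_sz_pos _ _ Hg) as Hd.
  replace (dlog phi s) with (Cdiv (- (rho * cos phi), - (rho * sin phi)) (one_sub_sz phi s)).
  - apply is_derive_C_cln; [|exact Hg].
    split; simpl; (auto_derive; [exact I | ring]).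
  - unfold dlog, sqnorm_one_sub_sz, Cdiv, Cmult, Cinv, one_sub_sz in *. cbn [fst snd] in *.
    replace (s * rho ^ 2) with (s * rho ^ 2 * (sin phi ^ 2 + cos phi ^ 2))
      by (rewrite sin_sq_add_cos_sq; ring).
    f_equal; field; nra.
Qed.

Lemma is_derive_C_cln_one_sub_sz_phi (phi s : R) :
  re_or_im_pos (one_sub_sz phi s) ->
  is_derive_C (fun u => cln (one_sub_sz u s)) phi
    (Cdiv (Cmult (Copp Ci) (Cmult (RtoC s) (cpolar rho phi))) (one_sub_sz phi s)).
Proof.
  intros Hg. apply (is_derive_C_cln (fun u => one_sub_sz u s)); [|exact Hg].
  split; simpl; (auto_derive; [exact I | ring]).
Qed.

Lemma Li2_integrand_cpolar (phi s : R) :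
  Li2_integrand (cpolar rho phi) s =
  if Req_EM_T s 0 then Copp (cpolar rho phi)
  else (/ s * Re (cln (one_sub_sz phi s)), / s * Im (cln (one_sub_sz phi s))).
Proof.
  unfold Li2_integrand. destruct (Req_EM_T s 0); [reflexivity|].
  rewrite one_sub_sz_eq. unfold Cmult, RtoC, Re, Im. cbn [fst snd]. f_equal; ring.
Qed.

Lemma cln_one_sub_sz_0 (phi : R) : cln (one_sub_sz phi 0) = (0, 0).
Proof.
  replace (one_sub_sz phi 0) with (RtoC 1) by (unfold one_sub_sz, RtoC; f_equal; ring).
  unfold cln. rewrite Cmod_1, ln_1, carg_re_pos by (simpl; lra).
  unfold Re, Im, RtoC; simpl. rewrite Rdiv_0_l, atan_0. reflexivity.
Qed.

Lemma is_derive_C_cln_one_sub_sz_0 (phi : R) :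
  is_derive_C (fun v => cln (one_sub_sz phi v)) 0 (Copp (cpolar rho phi)).
Proof.
  replace (Copp (cpolar rho phi)) with (dlog phi 0).
  - apply is_derive_C_cln_one_sub_sz_s. unfold re_or_im_pos, one_sub_sz, Re; simpl; lra.
  - assert (E : sqnorm_one_sub_sz phi 0 = 1) by (unfold sqnorm_one_sub_sz; ring).
    unfold dlog, Copp, cpolar. rewrite E. cbn [fst snd]. f_equal; field.
Qed.

Lemma is_derive_C_integrand_phi (phi s : R) :
  re_or_im_pos (one_sub_sz phi s) ->
  is_derive_C (fun u => Li2_integrand (cpolar rho u) s) phi (Cmult Ci (dlog phi s)).
Proof.
  intros Hg. pose proof (sqnorm_one_sub_sz_pos _ _ Hg) as Hd.
  apply (is_derive_C_ext_loc (fun u => if Req_EM_T s 0 then Copp (cpolar rho u)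
           else (/ s * Re (cln (one_sub_sz u s)), / s * Im (cln (one_sub_sz u s))))).
  { apply filter_forall. intros u. symmetry. apply Li2_integrand_cpolar. }
  destruct (Req_EM_T s 0) as [->|Hs].
  - replace (Cmult Ci (dlog phi 0)) with (rho * sin phi, - (rho * cos phi)).
    + split; simpl; (auto_derive; [exact I | ring]).
    + assert (E : sqnorm_one_sub_sz phi 0 = 1) by (unfold sqnorm_one_sub_sz; ring).
      unfold Cmult, Ci, dlog. rewrite E. cbn [fst snd]. f_equal; field.
  - destruct (is_derive_C_cln_one_sub_sz_phi _ _ Hg) as [H1 H2].
    replace (Cmult Ci (dlog phi s)) with
      (/ s * Re (Cdiv (Cmult (Copp Ci) (Cmult (RtoC s) (cpolar rho phi))) (one_sub_sz phi s)),
       / s * Im (Cdiv (Cmult (Copp Ci) (Cmult (RtoC s) (cpolar rho phi))) (one_sub_sz phi s))).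
    + split; apply is_derive_scal; assumption.
    + unfold Cdiv, Cinv, Cmult, Copp, RtoC, cpolar, Ci, dlog, sqnorm_one_sub_sz, one_sub_sz,
        Re, Im in *.
      cbn [fst snd] in *.
      replace (s * rho ^ 2) with (s * rho ^ 2 * (sin phi ^ 2 + cos phi ^ 2))
        by (rewrite sin_sq_add_cos_sq; ring).
      f_equal; field; repeat split; try exact Hs; nra.
Qed.

Lemma continuity_2d_pt_Ci_dlog (phi s : R) :
  0 < sqnorm_one_sub_sz phi s ->
  continuity_2d_pt (fun u v => Re (Cmult Ci (dlog u v))) phi s /\
  continuity_2d_pt (fun u v => Im (Cmult Ci (dlog u v))) phi s.
Proof.
  intros Hd. unfold Cmult, Ci, dlog, Re, Im, Rdiv. cbn [fst snd].
  unfold sqnorm_one_sub_sz in *. split; continuity_2d; lra.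
Qed.

Lemma ex_RInt_integrand (phi : R) :
  sin phi < 0 ->
  ex_RInt (fun v => Re (Li2_integrand (cpolar rho phi) v)) 0 1 /\
  ex_RInt (fun v => Im (Li2_integrand (cpolar rho phi) v)) 0 1.
Proof.
  intros Hp.
  assert (Hder : forall s, 0 <= s ->
            is_derive_C (fun v => cln (one_sub_sz phi v)) s (dlog phi s)).
  { intros s Hs. apply is_derive_C_cln_one_sub_sz_s, re_or_im_pos_one_sub_sz; lra. }
  destruct (is_derive_C_cln_one_sub_sz_0 phi) as [D1 D2].
  pose proof (cln_one_sub_sz_0 phi) as E0.
  split; apply (ex_RInt_continuous (V := R_CompleteNormedModule)); intros s Hs;
    rewrite Rmin_left, Rmax_right in Hs by lra; apply continuity_pt_filterlim.
  - apply (continuity_pt_ext (fun v => if Req_EM_T v 0 then Re (Copp (cpolar rho phi))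
                                       else / v * Re (cln (one_sub_sz phi v)))).
    { intros v. rewrite Li2_integrand_cpolar. destruct (Req_EM_T v 0); reflexivity. }
    apply continuity_pt_quotient_ext.
    + intros ->. rewrite E0. split; [exact D1 | reflexivity].
    + intros _. eexists. apply Hder. lra.
  - apply (continuity_pt_ext (fun v => if Req_EM_T v 0 then Im (Copp (cpolar rho phi))
                                       else / v * Im (cln (one_sub_sz phi v)))).
    { intros v. rewrite Li2_integrand_cpolar. destruct (Req_EM_T v 0); reflexivity. }
    apply continuity_pt_quotient_ext.
    + intros ->. rewrite E0. split; [exact D2 | reflexivity].
    + intros _. eexists. apply Hder. lra.
Qed.

Lemma Li2_cpolar (phi : R) :
  sin phi < 0 ->
  Li2 (cpolar rho phi) =
  Copp (RInt (fun v => Re (Li2_integrand (cpolar rho phi) v)) 0 1,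
        RInt (fun v => Im (Li2_integrand (cpolar rho phi) v)) 0 1).
Proof.
  intros Hp. destruct (ex_RInt_integrand phi Hp) as [I1 I2].
  unfold Li2. f_equal. apply is_RInt_unique, is_RInt_fct_extend_pair;
    apply (RInt_correct (V := R_CompleteNormedModule)); assumption.
Qed.

(* The [phi]-derivative of the integrand is [i] times the [s]-derivative of
   [cln (1 - s z)], so the derivative of the integral telescopes to [i cln (1 - z)]. *)
Lemma is_derive_C_Li2_cpolar (phi : R) :
  sin phi < 0 ->
  is_derive_C (fun u => Li2 (cpolar rho u)) phi (Cmult (Copp Ci) (cln (one_sub_sz phi 1))).
Proof.
  intros Hp.
  assert (Hloc : locally phi (fun u => sin u < 0)).
  { apply (filter_imp (fun u => 0 < - sin u)); [intros; lra|].
    apply continuity_pt_locally_pos; [apply continuity_pt_opp, continuity_sin | lra]. }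
  set (F := fun u => (RInt (fun v => Re (Li2_integrand (cpolar rho u) v)) 0 1,
                      RInt (fun v => Im (Li2_integrand (cpolar rho u) v)) 0 1)).
  assert (HF : is_derive_C F phi
                 (Cminus (Cmult Ci (cln (one_sub_sz phi 1))) (Cmult Ci (cln (one_sub_sz phi 0))))).
  { apply (is_derive_C_RInt_param_FTC _ (fun u v => Cmult Ci (dlog u v))
             (fun u v => Cmult Ci (cln (one_sub_sz u v)))).
    - apply (filter_imp _ _ (fun u Hu v Hv => is_derive_C_integrand_phi u v
               (re_or_im_pos_one_sub_sz u v Hu (proj1 Hv))) Hloc).
    - intros v Hv. assert (Hg := re_or_im_pos_one_sub_sz phi v Hp (proj1 Hv)).
      destruct (continuity_2d_pt_Ci_dlog phi v (sqnorm_one_sub_sz_pos _ _ Hg)) as [C1 C2].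
      refine (conj _ (conj C1 (conj C2 _))).
      + apply (locally_2d_impl _ _ _ _ (locally_2d_forall _ _ _ is_derive_C_integrand_phi)).
        exact (locally_2d_re_or_im_pos_one_sub_sz _ _ Hg).
      + apply is_derive_C_Cmult_l, is_derive_C_cln_one_sub_sz_s, Hg.
    - apply (filter_imp _ _ ex_RInt_integrand Hloc). }
  apply (is_derive_C_ext_loc (fun u => Cmult (RtoC (-1)) (F u))).
  { apply (filter_imp (fun u => sin u < 0)); [|exact Hloc].
    intros u Hu. rewrite (Li2_cpolar u Hu). unfold F, Cmult, Copp, RtoC. cbn [fst snd].
    f_equal; ring. }
  replace (Cmult (Copp Ci) (cln (one_sub_sz phi 1)))
    with (Cmult (RtoC (-1)) (Cminus (Cmult Ci (cln (one_sub_sz phi 1)))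
                                   (Cmult Ci (cln (one_sub_sz phi 0))))).
  - apply is_derive_C_Cmult_l, HF.
  - rewrite cln_one_sub_sz_0. destruct (cln (one_sub_sz phi 1)).
    unfold Cmult, Cminus, Cplus, Copp, RtoC, Ci. cbn [fst snd]. f_equal; ring.
Qed.

Lemma Cmod_deriv_cln_one_sub_sz_le (phi sg : R) :
  0 < sg -> sin phi <= - sg ->
  Cmod (Cdiv (Cmult (Copp Ci) (Cmult (RtoC 1) (cpolar rho phi))) (one_sub_sz phi 1)) <= / sg.
Proof.
  intros Hsg Hs.
  assert (Hu : Cmod (Cmult (Copp Ci) (Cmult (RtoC 1) (cpolar rho phi))) = rho).
  { rewrite !Cmod_mult, Cmod_opp, Cmod_Ci, Cmod_R, Rabs_R1, Cmod_cpolar; lra. }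
  apply Cmod_div_le_of_Im; [exact Hsg | lra |].
  rewrite Hu. unfold one_sub_sz, Im. simpl. rewrite Rabs_pos_eq by nra. nra.
Qed.

Lemma Cmod_Li2_increment_le (alpha h sg : R) :
  0 < sg -> 0 <= h -> (forall x, alpha <= x <= alpha + h -> sin x <= - sg) ->
  Cmod (Cplus (Cminus (Li2 (cpolar rho (alpha + h))) (Li2 (cpolar rho alpha)))
              (Cmult (RtoC h) (Cmult Ci (cln (one_sub_sz alpha 1))))) <= h * h / sg.
Proof.
  intros Hsg Hh Hs.
  (* [g u = Li2 (z u) + u i l(alpha)] below has derivative [-i (l u - l alpha)]. *)
  set (l := fun u => cln (one_sub_sz u 1)).
  assert (Hl : forall x, alpha <= x <= alpha + h -> Cmod (Cminus (l x) (l alpha)) <= h / sg).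
  { intros x Hx.
    eapply Rle_trans.
    - apply (Cmod_sub_le_of_is_derive_C l
               (fun u => Cdiv (Cmult (Copp Ci) (Cmult (RtoC 1) (cpolar rho u))) (one_sub_sz u 1))
               alpha x (/ sg)); [lra | |].
      + intros y Hy. apply is_derive_C_cln_one_sub_sz_phi.
        apply re_or_im_pos_one_sub_sz; [|lra].
        assert (sin y <= - sg) by (apply Hs; lra). lra.
      + intros y Hy. apply Cmod_deriv_cln_one_sub_sz_le; [exact Hsg | apply Hs; lra].
    - replace (h / sg) with (/ sg * h) by (unfold Rdiv; ring).
      apply Rmult_le_compat_l; [left; apply Rinv_0_lt_compat, Hsg | lra]. }
  set (g := fun u => Cplus (Li2 (cpolar rho u)) (Cmult (RtoC u) (Cmult Ci (l alpha)))).
  replace (Cplus (Cminus (Li2 (cpolar rho (alpha + h))) (Li2 (cpolar rho alpha)))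
              (Cmult (RtoC h) (Cmult Ci (cln (one_sub_sz alpha 1)))))
    with (Cminus (g (alpha + h)) (g alpha)).
  2:{ unfold g, l. destruct (Li2 (cpolar rho (alpha + h))), (Li2 (cpolar rho alpha)),
        (cln (one_sub_sz alpha 1)).
      unfold Cminus, Cplus, Copp, Cmult, RtoC, Ci. cbn [fst snd]. f_equal; ring. }
  replace (h * h / sg) with (h / sg * (alpha + h - alpha)) by (field; lra).
  apply (Cmod_sub_le_of_is_derive_C g
           (fun u => Cplus (Cmult (Copp Ci) (l u)) (Cmult Ci (l alpha)))); [lra | |].
  - intros x Hx. apply is_derive_C_plus.
    + apply is_derive_C_Li2_cpolar.
      assert (sin x <= - sg) by (apply Hs; exact Hx). lra.
    + split; simpl; (auto_derive; [exact I | ring]).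
  - intros x Hx.
    replace (Cplus (Cmult (Copp Ci) (l x)) (Cmult Ci (l alpha)))
      with (Cmult (Copp Ci) (Cminus (l x) (l alpha))).
    + rewrite Cmod_mult, Cmod_opp, Cmod_Ci, Rmult_1_l. apply Hl, Hx.
    + destruct (l x), (l alpha). unfold Cminus, Cplus, Copp, Cmult, Ci. cbn [fst snd].
      f_equal; ring.
Qed.

End DilogarithmOnCircle.

Lemma sin_le_neg_sin (c x : R) :
  0 < c <= PI / 2 -> - PI + c <= x <= - c -> sin x <= - sin c.
Proof.
  intros Hc Hx. destruct (Rle_dec (- (PI / 2)) x) as [H|H].
  - assert (sin c <= sin (- x)) by (apply sin_incr_1; lra).
    rewrite sin_neg in H0. lra.
  - assert (sin c <= sin (x + PI)) by (apply sin_incr_1; lra).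
    rewrite neg_sin in H0. lra.
Qed.

Lemma cexp_eq_cpolar (z : C) (rho phi : R) :
  exp (Re z) = rho -> Im z = phi -> cexp z = cpolar rho phi.
Proof. intros <- <-. reflexivity. Qed.

Lemma Cmod_div_add_1_le (e : R) : 0 < e -> Cmod (Cdiv (RtoC e) (Cplus (RtoC e) 1)) <= 1.
Proof.
  intros He. rewrite Cmod_div.
  - rewrite <- RtoC_plus, !Cmod_R, !Rabs_pos_eq by lra.
    apply (Rmult_le_reg_r (e + 1)); [lra|]. field_simplify; lra.
  - rewrite <- RtoC_plus. intros E. apply RtoC_inj in E. lra.
Qed.

Lemma Cmod_rational_terms_le (rho alpha beta e sg : R) :
  0 < rho -> 0 < e -> 0 < sg -> sin alpha <= - sg -> sin beta <= - sg ->
  Cmod (Cplus (Cminus (Cminus (Cdiv (cpolar rho beta) (Cminus (cpolar rho beta) 1))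
                              (Cdiv (RtoC e) (Cplus (RtoC e) 1)))
                      (Cdiv (cpolar rho alpha) (Cplus (RtoC e) (cpolar rho alpha))))
              (RtoC 2)) <= 2 / sg + 3.
Proof.
  intros Hr He Hsg Ha Hb.
  assert (Hw : Cmod (Cdiv (cpolar rho beta) (Cminus (cpolar rho beta) 1)) <= / sg).
  { apply Cmod_div_le_of_Im; rewrite ?Cmod_cpolar; try lra.
    unfold cpolar, Cminus, Cplus, Copp, RtoC, Im. simpl.
    rewrite Rabs_left by nra. nra. }
  assert (Hq : Cmod (Cdiv (cpolar rho alpha) (Cplus (RtoC e) (cpolar rho alpha))) <= / sg).
  { apply Cmod_div_le_of_Im; rewrite ?Cmod_cpolar; try lra.
    unfold cpolar, Cplus, RtoC, Im. simpl.
    rewrite Rabs_left by nra. nra. }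
  pose proof (Cmod_div_add_1_le e He) as Hz.
  eapply Rle_trans; [apply Cmod_triangle|].
  rewrite Cmod_R, Rabs_pos_eq by lra.
  pose proof (Cmod_sub_le (Cminus (Cdiv (cpolar rho beta) (Cminus (cpolar rho beta) 1))
                                  (Cdiv (RtoC e) (Cplus (RtoC e) 1)))
                          (Cdiv (cpolar rho alpha) (Cplus (RtoC e) (cpolar rho alpha)))).
  pose proof (Cmod_sub_le (Cdiv (cpolar rho beta) (Cminus (cpolar rho beta) 1))
                          (Cdiv (RtoC e) (Cplus (RtoC e) 1))).
  unfold Rdiv. lra.
Qed.

Lemma Cmod_Ci_sub_div_add_half (A B l : C) (h : R) :
  0 < h ->
  Cmod (Cplus (Cdiv (Cmult Ci (Cminus A B)) (RtoC (2 * h))) (Cdiv l (RtoC 2)))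
  = Cmod (Cplus (Cminus B A) (Cmult (RtoC h) (Cmult Ci l))) / (2 * h).
Proof.
  intros Hh.
  replace (Cplus (Cdiv (Cmult Ci (Cminus A B)) (RtoC (2 * h))) (Cdiv l (RtoC 2)))
    with (Cmult (RtoC (/ (2 * h)))
                (Cmult (Copp Ci) (Cplus (Cminus B A) (Cmult (RtoC h) (Cmult Ci l))))).
  - rewrite !Cmod_mult, Cmod_opp, Cmod_Ci, Cmod_R, Rabs_pos_eq.
    + unfold Rdiv. ring.
    + left. apply Rinv_0_lt_compat. lra.
  - destruct A, B, l. unfold Cdiv, Cinv, Cminus, Cplus, Copp, Cmult, RtoC, Ci. cbn [fst snd].
    f_equal; field; lra.
Qed.

(* [Defs.Ci] and Coquelicot's [Ci] are both [(0, 1)]; the lemmas above use the latter. *)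
Lemma Cmod_Eterm_le (zeta b sg : R) (t : C) :
  0 < b -> 0 < sg ->
  (forall x, 2 * PI * Im t <= x <= 2 * PI * Im t + PI * b ^ 2 -> sin x <= - sg) ->
  Cmod (Eterm zeta (RtoC (b ^ 2)) t) <= (PI / (2 * sg) + PI / 12 * (2 / sg + 3)) * b ^ 2.
Proof.
  intros Hb Hsg Hs. pose proof PI_RGT_0 as HPI.
  set (rho := exp (2 * PI * Re t)) in *. set (alpha := 2 * PI * Im t) in *.
  set (h := PI * b ^ 2) in *.
  assert (Hr : 0 < rho) by apply exp_pos.
  assert (Hh : 0 < h) by (apply Rmult_lt_0_compat; [lra | apply pow_lt; lra]).
  unfold Eterm. cbv zeta. change Defs.Ci with Ci.
  rewrite (cexp_eq_cpolar _ rho alpha)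
    by (unfold rho, alpha, Re, Im; simpl; first [ring | f_equal; ring]).
  rewrite (cexp_eq_cpolar _ rho (alpha + h))
    by (unfold rho, alpha, h, Ci, Re, Im; simpl; first [ring | f_equal; ring]).
  replace (Cminus 1 (cpolar rho alpha)) with (one_sub_sz rho alpha 1)
    by (rewrite <- one_sub_sz_eq, Cmult_1_l; reflexivity).
  replace (Cmult (RtoC (2 * PI)) (RtoC (b ^ 2))) with (RtoC (2 * h))
    by (unfold h; rewrite <- RtoC_mult; f_equal; ring).
  assert (Hcoef : Cmod (Cdiv (Cmult (Cmult Ci (RtoC PI)) (RtoC (b ^ 2))) (RtoC 12)) = h / 12).
  { rewrite Cmod_div, !Cmod_mult, Cmod_Ci, !Cmod_R, !Rabs_pos_eq; unfold h; try nra.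
    all: intros E; try apply RtoC_inj in E; lra. }
  pose proof (Cmod_Li2_increment_le rho Hr alpha h sg Hsg (Rlt_le _ _ Hh) Hs) as Hfirst.
  pose proof (Cmod_rational_terms_le rho alpha (alpha + h) (exp (2 * PI * zeta)) sg Hr
                (exp_pos _) Hsg (Hs alpha ltac:(lra)) (Hs (alpha + h) ltac:(lra))) as Hthird.
  eapply Rle_trans; [apply Cmod_triangle|].
  rewrite Cmod_Ci_sub_div_add_half, Cmod_mult, Hcoef by exact Hh.
  apply Rle_trans with (h * h / sg / (2 * h) + h / 12 * (2 / sg + 3)).
  - apply Rplus_le_compat.
    + unfold Rdiv at 1 3.
      apply Rmult_le_compat_r; [left; apply Rinv_0_lt_compat; lra | exact Hfirst].
    + apply Rmult_le_compat_l; [lra | exact Hthird].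
  - right. unfold h. field. lra.
Qed.

Theorem lemma4p1 (zeta delta : R) (Hd : 0 < delta < 1 / 6) :
  exists K : R, 0 < K /\
  exists b0 : R, 0 < b0 /\
  forall b : R, 0 < b < b0 ->
  forall t : C, -1/2 + delta < Im t < -2 * delta ->
  Cmod (Eterm zeta (RtoC (b ^ 2)) t) <= K * b ^ 2.
Proof.
  pose proof PI_RGT_0 as HPI.
  set (sg := sin (2 * PI * delta)).
  assert (Hsg : 0 < sg) by (apply sin_gt_0; nra).
  exists (PI / (2 * sg) + PI / 12 * (2 / sg + 3)). split.
  { assert (0 < / sg) by (apply Rinv_0_lt_compat, Hsg).
    unfold Rdiv. rewrite Rinv_mult. nra. }
  exists (sqrt delta). split; [apply sqrt_lt_R0; lra|].
  intros b Hb t Ht. apply Cmod_Eterm_le; [lra | exact Hsg |].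
  assert (Hb2 : b ^ 2 < delta) by (rewrite <- (sqrt_sqrt delta) by lra; simpl; nra).
  intros x Hx. apply sin_le_neg_sin; split; nra.
Qed.
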